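(* Let $V,W$ be finite-dimensional vector spaces over $\mathbb{F}_q$, and let $\varphi_V:\mathbb{F}_q^\nu\to V$, $\varphi_W:\mathbb{F}_q^\nu\to W$ be parent functions of spanning projective point families $\mathcal{F}_V\subset V$, $\mathcal{F}_W\subset W$ (each of size $\nu$), with parent codes $P_V=\ker\varphi_V$, $P_W=\ker\varphi_W$. Let $\mathcal{H}(P_V,P_W)$ be the set of linear Hamming isometries $\hat L$ of $\mathbb{F}_q^\nu$ with $\hat L(P_V)=P_W$, and $\mathrm{Isom}_{\mathcal{F}}(V,W)$ the set of projective isometries $(V,\operatorname{wt}_{\mathcal{F}_V})\to(W,\operatorname{wt}_{\mathcal{F}_W})$. Then: (a) for every $\hat L\in\mathcal{H}(P_V,P_W)$ there is a unique $L\in\mathrm{Isom}_{\mathcal{F}}(V,W)$ with $L\circ\varphi_V=\varphi_W\circ\hat L$, and the map $\Phi:\hat L\mapsto L$ is a bijection $\mathcal{H}(P_V,P_W)\to\mathrm{Isom}_{\mathcal{F}}(V,W)$; (b) $\Phi$ is compatible with composition: for three such spaces $U_1,U_2,U_3$ with parent functions and parent codes $P_1,P_2,P_3$, and $\hat L\in\mathcal{H}(P_1,P_2)$, $\hat T\in\mathcal{H}(P_2,P_3)$, one has $\Phi(\hat T\circ\hat L)=\Phi(\hat T)\circ\Phi(\hat L)$; (c) for any linear subspaces $\mathcal{D}_V\le V$, $\mathcal{D}_W\le W$, $\Phi$ restricts to a bijection from $\{\hat L\in\mathcal{H}(P_V,P_W):\hat L(\varphi_V^{-1}(\mathcal{D}_V))=\varphi_W^{-1}(\mathcal{D}_W)\}$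 onto $\{L\in\mathrm{Isom}_{\mathcal{F}}(V,W): L(\mathcal{D}_V)=\mathcal{D}_W\}$.
   Context: A spanning projective point family in $V$ is a set $\mathcal{F}$ of pairwise linearly independent nonzero vectors (distinct 1-dimensional subspaces) spanning $V$; its projective weight is $\operatorname{wt}_{\mathcal{F}}(x)=\min\{|I|:I\subseteq\mathcal{F},x\in\langle I\rangle\}$. A parent function of $\mathcal{F}$ with $|\mathcal{F}|=\nu$ is a linear map $\varphi:\mathbb{F}_q^\nu\to V$ with $\{\langle\varphi(e_i)\rangle\}_{i=1}^\nu=\mathcal{F}$ ($e_i$ standard basis vectors); $\ker\varphi$ is the parent code. A linear Hamming isometry of $\mathbb{F}_q^\nu$ is a linear bijection preserving Hamming weight. A projective isometry $V\to W$ is an invertible linear map $L$ with $\operatorname{wt}_{\mathcal{F}_W}(L(x))=\operatorname{wt}_{\mathcal{F}_V}(x)$ for all $x$. *)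

(* Finite-dimensional F_q-spaces are modelled as row spaces
   'rV[F]_n; linear maps as matrices acting on the right (x |-> x *m A). *)
From mathcomp Require Import all_boot all_order all_algebra.
Set Implicit Arguments. Unset Strict Implicit. Unset Printing Implicit Defensive.
Import GRing.Theory.
Local Open Scope ring_scope.

Section Defs.
Variable F : finFieldType.

Definition hweight (nu : nat) (x : 'rV[F]_nu) : nat := #|[set i | x ord0 i != 0]|.

Definition ppfamily (n : nat) (Fam : {set 'rV[F]_n}) : Prop :=
  [/\ 0 \notin Fam,
      {in Fam &, forall u v, u != v -> free [:: u; v]}
    & (<<enum Fam>>%VS = fullv)].

Definition pweight (n : nat) (Fam : {set 'rV[F]_n}) (x : 'rV[F]_n) : nat :=
  \big[minn/#|Fam|]_(I : {set 'rV[F]_n} | (I \subset Fam) && (x \in <<enum I>>%VS))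
    #|I|.

(* phi : F^nu -> V, phi(x) = x *m P, is a parent function of Fam (|Fam| = nu) *)
Definition parent_fun (nu n : nat) (Fam : {set 'rV[F]_n}) (P : 'M[F]_(nu, n))
  : Prop :=
  [/\ ppfamily Fam, #|Fam| = nu,
      (forall i : 'I_nu, exists2 v, v \in Fam & <[row i P]>%VS = <[v]>%VS)
    & (forall v, v \in Fam -> exists i : 'I_nu, <[row i P]>%VS = <[v]>%VS)].

Definition pcode (nu n : nat) (P : 'M[F]_(nu, n)) : {set 'rV[F]_nu} :=
  [set x | x *m P == 0].

Definition hamming_isom (nu : nat) (Lh : 'M[F]_nu) : bool :=
  (Lh \in unitmx) && [forall x : 'rV[F]_nu, hweight (x *m Lh) == hweight x].

Definition Hset (nu n m : nat) (PV : 'M[F]_(nu, n)) (PW : 'M[F]_(nu, m))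
  (Lh : 'M[F]_nu) : bool :=
  hamming_isom Lh && ((fun x => x *m Lh) @: pcode PV == pcode PW).

Definition proj_isom (n m : nat) (FamV : {set 'rV[F]_n}) (FamW : {set 'rV[F]_m})
  (L : 'M[F]_(n, m)) : bool :=
  [&& row_free L, row_full L &
      [forall x : 'rV[F]_n, pweight FamW (x *m L) == pweight FamV x]].

Definition Phi (nu n m : nat) (FamV : {set 'rV[F]_n}) (FamW : {set 'rV[F]_m})
  (PV : 'M[F]_(nu, n)) (PW : 'M[F]_(nu, m)) (Lh : 'M[F]_nu) : 'M[F]_(n, m) :=
  odflt 0 [pick L : 'M[F]_(n, m) | proj_isom FamV FamW L & PV *m L == Lh *m PW].

Definition parent_preim (nu n : nat) (P : 'M[F]_(nu, n)) (D : {vspace 'rV[F]_n})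
  : {set 'rV[F]_nu} := [set x | x *m P \in D].

Definition sub_image (n m : nat) (L : 'M[F]_(n, m)) (D : {vspace 'rV[F]_n})
  : {set 'rV[F]_m} := (fun x => x *m L) @: [set x | x \in D].

End Defs.

From mathcomp Require Import all_boot all_order all_algebra.
Set Implicit Arguments. Unset Strict Implicit. Unset Printing Implicit Defensive.
Import GRing.Theory.
Local Open Scope ring_scope.

(* The parent function sends the standard basis vectors onto the points of
   the family (up to scalars), so the projective weight of y is the least
   Hamming weight of a preimage of y.  A linear Hamming isometry is a monomial
   matrix; if it maps one parent code onto the other, it descends through the
   parent functions to a linear bijection, and comparing least preimage
   weights shows that this bijection preserves projective weight.  Conversely,
   a projective isometry L sends each point phi_V(e_i) to a vector of
   projective weight one, which lifts to a vector of Hamming weight one; these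
   lifts are the rows of a monomial matrix, and injectivity of L makes their
   supports distinct.  Since distinct basis vectors are sent to
   non-proportional points, the lift is unique. *)

Section HammingWeight.
Variables (F : finFieldType) (nu : nat).
Implicit Types (x y z : 'rV[F]_nu) (M : 'M[F]_nu).

Lemma hweight_eq0 z : (hweight z == 0%N) = (z == 0).
Proof.
rewrite cards_eq0; apply/eqP/eqP => [supp0 | ->]; last first.
  by apply/setP => i; rewrite !inE mxE eqxx.
apply/rowP => i; rewrite mxE; apply/eqP/negbNE.
by rewrite -[_ != 0](in_set (fun i => z ord0 i != 0)) supp0 inE.
Qed.

Lemma hweight0 : hweight (0 : 'rV[F]_nu) = 0%N.
Proof. by apply/eqP; rewrite hweight_eq0. Qed.

Lemma hweight_delta j : hweight ('e_j : 'rV[F]_nu) = 1%N.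
Proof.
rewrite /hweight (_ : [set _ | _] = [set j]) ?cards1 //; apply/setP => k.
by rewrite !inE mxE eqxx; case: (k == j); rewrite /= ?oner_neq0 ?eqxx.
Qed.

Lemma hweight_eq1 z : hweight z = 1%N -> exists2 j, z ord0 j != 0 & z = z ord0 j *: 'e_j.
Proof.
move/eqP/cards1P => [j supp_j]; have := set11 j; rewrite -supp_j inE => zj.
exists j => //; apply/rowP => k; rewrite !mxE.
have [-> | neq_kj] := eqVneq k j; first by rewrite mulr1.
apply/eqP; rewrite mulr0; apply: contraNT neq_kj => zk.
by rewrite -in_set1 -supp_j inE.
Qed.

Lemma hweightZ c z : (hweight (c *: z) <= hweight z)%N.
Proof.
apply/subset_leq_card/subsetP => k; rewrite !inE mxE.
by apply: contra => /eqP ->; rewrite mulr0.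
Qed.

Lemma hweightD y z : (hweight (y + z) <= hweight y + hweight z)%N.
Proof.
apply: leq_trans (leq_card_setU _ _); apply/subset_leq_card/subsetP => k.
rewrite !inE mxE; apply: contraR; rewrite negb_or !negbK.
by case/andP => /eqP -> /eqP ->; rewrite addr0.
Qed.

Lemma hweight_sum (I : Type) (r : seq I) (P : pred I) (G : I -> 'rV[F]_nu) :
  (hweight (\sum_(i <- r | P i) G i) <= \sum_(i <- r | P i) hweight (G i))%N.
Proof.
elim/big_ind2: _ => [|y1 n1 y2 n2 le1 le2|//]; first by rewrite hweight0.
exact: leq_trans (hweightD _ _) (leq_add le1 le2).
Qed.

Lemma hamming_isomP M : reflect (forall x, hweight (x *m M) = hweight x) (hamming_isom M).
Proof.
apply: (iffP andP) => [[_ /forallP wM] x | wM]; first exact/eqP.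
split; last by apply/forallP => x; rewrite wM.
rewrite -row_free_unit; apply: inj_row_free => x xM0.
by apply/eqP; rewrite -hweight_eq0 -wM xM0 hweight0.
Qed.

Lemma hamming_isom_unit M : hamming_isom M -> M \in unitmx.
Proof. by case/andP. Qed.

Lemma hamming_isomV M : hamming_isom M -> hamming_isom (invmx M).
Proof.
move=> isoM; have uM := hamming_isom_unit isoM.
apply/hamming_isomP => x; move/hamming_isomP: isoM => <-.
by rewrite mulmxKV.
Qed.

Lemma hamming_isom_row M i : hamming_isom M -> hweight (row i M) = 1%N.
Proof. by move/hamming_isomP; rewrite rowE => ->; rewrite hweight_delta. Qed.

Lemma monomial_hamming_isom M (s : 'I_nu -> 'I_nu) :
  injective s -> (forall i, M i (s i) != 0 /\ row i M = M i (s i) *: 'e_(s i)) ->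
  hamming_isom M.
Proof.
move=> s_inj rowM; apply/hamming_isomP => x.
have Mik i k : M i k = M i (s i) * (s i == k)%:R.
  have := congr1 (fun v : 'rV_nu => v ord0 k) (rowM i).2.
  by rewrite !mxE eqxx andTb eq_sym.
have xM_s i : (x *m M) ord0 (s i) = x ord0 i * M i (s i).
  rewrite mxE (bigD1 i) //= big1 => [|j neq_ji]; first by rewrite Mik eqxx mulr1 addr0.
  by rewrite Mik (inj_eq s_inj) (negbTE neq_ji) mulr0 mulr0.
rewrite /hweight -[in RHS](card_imset _ s_inj); apply: eq_card => k.
have /codomP [i ->] := injF_onto s_inj k.
by rewrite inE xM_s mem_imset // inE mulf_eq0 negb_or (rowM i).1 andbT.
Qed.

End HammingWeight.

Section ProjectiveWeight.
Variables (F : finFieldType) (n : nat) (Fam : {set 'rV[F]_n}).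

Lemma pweight_le (I : {set 'rV[F]_n}) y :
  I \subset Fam -> y \in <<enum I>>%VS -> (pweight Fam y <= #|I|)%N.
Proof.
move=> sIF yI; rewrite /pweight -minEnat -Order.NatOrder.leEnat.
by apply: (@Order.TotalTheory.bigmin_inf _ _ _ _ I); rewrite ?sIF.
Qed.

Lemma pweight_witness y : <<enum Fam>>%VS = fullv ->
  exists2 I : {set 'rV[F]_n}, (I \subset Fam) && (y \in <<enum I>>%VS) &
    (#|I| <= pweight Fam y)%N.
Proof.
move=> spanF; rewrite /pweight; elim/big_ind: _ => [|a b [I ? le_Ia] [J ? le_Jb]|I ?].
- by exists Fam; rewrite ?subxx ?spanF ?memvf.
- by case: (leqP a b) => [le_ab | /ltnW le_ba]; [exists I | exists J];
    rewrite // geq_min ?le_Ia ?le_Jb ?orbT.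
- by exists I.
Qed.

End ProjectiveWeight.

Section Parent.
Variables (F : finFieldType) (nu n : nat) (Fam : {set 'rV[F]_n}) (P : 'M[F]_(nu, n)).
Hypothesis parentP : parent_fun Fam P.

(* The default value [0] is never taken, since every row spans the line of a
   point of [Fam]. *)
Definition parent_point i : 'rV[F]_n :=
  odflt 0 [pick v in Fam | <[row i P]>%VS == <[v]>%VS].

Lemma parent_pointP i : parent_point i \in Fam /\ <[row i P]>%VS = <[parent_point i]>%VS.
Proof.
rewrite /parent_point; case: pickP => [v /andP[vF /eqP] // | none].
case: parentP => _ _ lineP _; have [v vF line_v] := lineP i.
by have := none v; rewrite vF line_v eqxx.
Qed.

Lemma fam_line_eq : {in Fam &, forall u v, v \in <[u]>%VS -> v = u}.
Proof.
case: parentP => [[_ freeF _] _ _ _] u v uF vF vu; apply/eqP/negbNE/negP => neq_vu.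
by have := freeF v u vF uF neq_vu; rewrite free_cons span_seq1 vu.
Qed.

Lemma parent_point_inj : injective parent_point.
Proof.
case: parentP => _ cardF _ onto.
have sub_img : Fam \subset parent_point @: 'I_nu.
  apply/subsetP => v vF; have [k line_k] := onto v vF.
  have [kF line_pk] := parent_pointP k.
  by rewrite (fam_line_eq kF vF) ?imset_f // -line_pk line_k memv_line.
have /imset_injP inj : #|parent_point @: 'I_nu| == #|'I_nu|.
  by rewrite eqn_leq leq_imset_card card_ord -{1}cardF subset_leq_card.
by move=> i j; apply: inj.
Qed.

Lemma parent_row_neq0 i : row i P != 0.
Proof.
have [iF line_i] := parent_pointP i; apply: contraTneq iF => row0.
case: parentP => [[F0 _ _] _ _ _].
have /vlineP [c ->] : parent_point i \in <[row i P]>%VS by rewrite line_i memv_line.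
by rewrite row0 scaler0.
Qed.

Lemma parent_row_line_inj i j : row j P \in <[row i P]>%VS -> j = i.
Proof.
move=> ji; apply: parent_point_inj; have [iF line_i] := parent_pointP i.
have [jF line_j] := parent_pointP j.
apply: (fam_line_eq iF jF); rewrite -line_i.
by apply: subvP (memv_line _); rewrite -line_j -memvE.
Qed.

Lemma parent_weight1_inj z z' :
  hweight z = 1%N -> hweight z' = 1%N -> z *m P = z' *m P -> z = z'.
Proof.
move=> /hweight_eq1 [j + ->] /hweight_eq1 [j' + ->].
move: (z ord0 j) (z' ord0 j') => c c' c_nz c'_nz.
rewrite -!scalemxAl -!rowE => eq_zP.
have eq_j'j : j' = j.
  apply: parent_row_line_inj; apply/vlineP; exists (c'^-1 * c).
  by rewrite -scalerA eq_zP scalerA mulVf // scale1r.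
subst j'; congr (_ *: _); apply/eqP; rewrite -subr_eq0.
have : (c - c') *: row j P == 0 by rewrite scalerBl eq_zP subrr.
by rewrite scaler_eq0 (negbTE (parent_row_neq0 j)) orbF.
Qed.

Lemma hamming_isom_mulmx_inj : {in @hamming_isom F nu &, injective (mulmx^~ P)}.
Proof.
move=> M M' isoM isoM' eq_MP; apply/row_matrixP => i.
apply: parent_weight1_inj; rewrite ?hamming_isom_row //.
by rewrite -!row_mul eq_MP.
Qed.

Lemma parent_fam_lift v : v \in Fam -> exists2 z, z *m P = v & (hweight z <= 1)%N.
Proof.
case: parentP => _ _ _ onto /onto [k line_k].
have /vlineP [c ->] : v \in <[row k P]>%VS by rewrite line_k memv_line.
exists (c *: 'e_k); first by rewrite -scalemxAl -rowE.
by apply: leq_trans (hweightZ _ _) _; rewrite hweight_delta.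
Qed.

Lemma pweight_mulmx_le x : (pweight Fam (x *m P) <= hweight x)%N.
Proof.
set S := [set i | x ord0 i != 0].
apply: leq_trans (leq_imset_card parent_point S); apply: pweight_le.
  by apply/subsetP => _ /imsetP [i _ ->]; case: (parent_pointP i).
rewrite mulmx_sum_row; apply: memv_suml => i _.
have [-> | x_i] := eqVneq (x ord0 i) 0; first by rewrite scale0r mem0v.
apply: memvZ; apply: subvP (memv_line (row i P)).
by rewrite (parent_pointP i).2 -memvE memv_span // mem_enum imset_f // inE.
Qed.

Lemma pweight_lift y : exists2 x, x *m P = y & (hweight x <= pweight Fam y)%N.
Proof.
case: parentP => [[_ _ spanF] _ _ _].
have [I /andP[sIF yI] le_I] := pweight_witness y spanF.
have /(fin_all_exists (U := fun=> 'rV_nu)) [g gP] : forall v, exists z : 'rV_nu,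
    v \in Fam -> z *m P = v /\ (hweight z <= 1)%N.
  move=> v; have [/parent_fam_lift [z] | _] := boolP (v \in Fam); last by exists 0.
  by exists z.
set X := enum_tuple I.
have XF (k : 'I_#|I|) : X`_k \in Fam.
  by apply/(subsetP sIF); rewrite -mem_enum mem_nth ?size_tuple.
exists (\sum_k coord X k y *: g X`_k).
  rewrite mulmx_suml [RHS](coord_span yI); apply: eq_bigr => k _.
  by rewrite -scalemxAl (gP _ (XF k)).1.
apply: leq_trans (hweight_sum _ _ _) (leq_trans _ le_I).
apply: (@leq_trans (\sum_(k < #|I|) 1)%N); last by rewrite sum1_card card_ord.
by apply: leq_sum => k _; apply: leq_trans (hweightZ _ _) (gP _ (XF k)).2.
Qed.

Lemma parent_row_full : row_full P.
Proof.
rewrite -sub1mx; apply/row_subP => k; apply/submxP.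
by have [x <- _] := pweight_lift (row k 1%:M); exists x.
Qed.

End Parent.

Lemma row_full_factor (F : fieldType) p n m (A : 'M[F]_(p, n)) (B : 'M[F]_(p, m)) :
  row_full A -> (forall x : 'rV_p, x *m A = 0 -> x *m B = 0) -> exists L, A *m L = B.
Proof.
case/row_fullP => R RA kerAB; exists (R *m B); rewrite mulmxA.
apply/eqP; rewrite -subr_eq0 -{2}[B]mul1mx -mulmxBl; apply/eqP/row_matrixP => i.
by rewrite row_mul row0 kerAB // -row_mul mulmxBl -mulmxA RA mulmx1 mul1mx subrr row0.
Qed.

Lemma pcodeE (F : finFieldType) nu n (P : 'M[F]_(nu, n)) : pcode P = parent_preim P 0%VS.
Proof. by apply/setP => x; rewrite !inE memv0. Qed.

Lemma sub_image0 (F : finFieldType) n m (L : 'M[F]_(n, m)) :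
  sub_image L 0%VS = [set y : 'rV_m | y \in 0%VS].
Proof.
apply/setP => y; rewrite inE memv0; apply/imsetP/eqP => [[x] | ->].
  by rewrite inE memv0 => /eqP -> ->; rewrite mul0mx.
by exists 0; rewrite ?mul0mx // inE mem0v.
Qed.

Section PreimageImage.
Variables (F : finFieldType) (p n m : nat) (A : 'M[F]_(p, n)) (B : 'M[F]_(p, m)).
Variables (M : 'M[F]_p) (L : 'M[F]_(n, m)).
Hypotheses (fullA : row_full A) (fullB : row_full B).
Hypotheses (unitM : M \in unitmx) (freeL : row_free L) (AL : A *m L = M *m B).

Lemma image_parent_preim DV DW :
  ((fun x => x *m M) @: parent_preim A DV == parent_preim B DW) =
  (sub_image L DV == [set y | y \in DW]).
Proof.
have [RA RAA] := row_fullP fullA; have [RB RBB] := row_fullP fullB.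
apply/eqP/eqP => img; apply/setP => y; rewrite [in RHS]inE.
- apply/imsetP/idP => [[v] | yW].
    rewrite inE => vV ->.
    have : v *m RA *m M \in parent_preim B DW.
      by rewrite -img; apply: imset_f; rewrite inE -mulmxA RAA mulmx1.
    by rewrite inE -mulmxA -AL mulmxA -(mulmxA v) RAA mulmx1.
  have : y *m RB \in parent_preim B DW by rewrite inE -mulmxA RBB mulmx1.
  rewrite -img => /imsetP [x]; rewrite inE => xV xM.
  by exists (x *m A); rewrite ?inE // -mulmxA AL mulmxA -xM -mulmxA RBB mulmx1.
- apply/imsetP/idP => [[x] | yW].
    rewrite inE => xV ->.
    have : x *m A *m L \in sub_image L DV by apply: imset_f; rewrite inE.
    by rewrite img inE -mulmxA AL mulmxA.
  have : y *m B \in sub_image L DV by rewrite img inE.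
  case/imsetP => v; rewrite inE => vV yBv.
  exists (y *m invmx M); last by rewrite mulmxKV.
  rewrite inE (_ : _ *m A = v) //; apply: (row_free_inj freeL).
  by rewrite -mulmxA AL mulmxA mulmxKV.
Qed.

End PreimageImage.

Lemma proj_isom_mul (F : finFieldType) n1 n2 n3 (F1 : {set 'rV[F]_n1})
    (F2 : {set 'rV[F]_n2}) (F3 : {set 'rV[F]_n3}) (A : 'M[F]_(n1, n2)) (B : 'M[F]_(n2, n3)) :
  proj_isom F1 F2 A -> proj_isom F2 F3 B -> proj_isom F1 F3 (A *m B).
Proof.
case/and3P => /row_freeP [A' AA'] /row_fullP [A'' A''A] /forallP wA.
case/and3P => /row_freeP [B' BB'] /row_fullP [B'' B''B] /forallP wB.
apply/and3P; split.
- by apply/row_freeP; exists (B' *m A'); rewrite mulmxA -(mulmxA A) BB' mulmx1.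
- by apply/row_fullP; exists (B'' *m A''); rewrite mulmxA -(mulmxA B'') A''A mulmx1.
- by apply/forallP => x; rewrite mulmxA (eqP (wB _)) (eqP (wA _)).
Qed.

Lemma pweight_intertwine_le (F : finFieldType) nu n m (FamV : {set 'rV[F]_n})
    (FamW : {set 'rV[F]_m}) (PV : 'M[F]_(nu, n)) (PW : 'M[F]_(nu, m)) Lh L y :
  parent_fun FamV PV -> parent_fun FamW PW -> hamming_isom Lh ->
  PV *m L = Lh *m PW -> (pweight FamW (y *m L) <= pweight FamV y)%N.
Proof.
move=> pV pW /hamming_isomP isoLh PVL; have [x <- le_x] := pweight_lift pV y.
rewrite -mulmxA PVL mulmxA; apply: leq_trans (pweight_mulmx_le pW _) _.
by rewrite isoLh.
Qed.

Section Intertwine.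
Variables (F : finFieldType) (nu n m : nat).
Variables (FamV : {set 'rV[F]_n}) (FamW : {set 'rV[F]_m}).
Variables (PV : 'M[F]_(nu, n)) (PW : 'M[F]_(nu, m)).
Hypotheses (pV : parent_fun FamV PV) (pW : parent_fun FamW PW).

Lemma Hset_ker Lh (x : 'rV_nu) : Hset PV PW Lh -> (x *m Lh *m PW == 0) = (x *m PV == 0).
Proof.
case/andP => /hamming_isom_unit uLh /eqP img; apply/idP/idP => x0.
  have : x *m Lh \in pcode PW by rewrite inE.
  by rewrite -img => /imsetP [x' + /(can_inj (mulmxK uLh)) ->]; rewrite inE.
have : x *m Lh \in pcode PW by rewrite -img; apply: imset_f; rewrite inE.
by rewrite inE.
Qed.

Lemma Hset_intertwine Lh : Hset PV PW Lh -> exists L, PV *m L = Lh *m PW.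
Proof.
move=> hLh; apply: row_full_factor (parent_row_full pV) _ => x /eqP x0.
by apply/eqP; rewrite mulmxA Hset_ker.
Qed.

Lemma intertwine_isom Lh L :
  Hset PV PW Lh -> PV *m L = Lh *m PW -> proj_isom FamV FamW L.
Proof.
move=> hLh PVL; have isoLh := (andP hLh).1; have uLh := hamming_isom_unit isoLh.
(* The map induced by [invmx Lh] inverts [L], so the weight inequality holds
   in both directions. *)
have [L' PWL'] : exists L', PW *m L' = invmx Lh *m PV.
  apply: row_full_factor (parent_row_full pW) _ => y y0; apply/eqP.
  by rewrite mulmxA -(Hset_ker _ hLh) mulmxKV // y0.
have LL' : L *m L' = 1%:M.
  apply: (row_full_inj (parent_row_full pV)).
  by rewrite mulmx1 mulmxA PVL -mulmxA PWL' mulmxA mulmxV // mul1mx.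
have L'L : L' *m L = 1%:M.
  apply: (row_full_inj (parent_row_full pW)).
  by rewrite mulmx1 mulmxA PWL' -mulmxA PVL mulmxA mulVmx // mul1mx.
apply/and3P; split; [by apply/row_freeP; exists L' | by apply/row_fullP; exists L' |].
apply/forallP => y; rewrite eqn_leq (pweight_intertwine_le _ pV pW isoLh PVL) /=.
have isoLh' := hamming_isomV isoLh.
by rewrite -{1}[y]mulmx1 -LL' mulmxA (pweight_intertwine_le _ pW pV isoLh' PWL').
Qed.

Lemma PhiE Lh L : proj_isom FamV FamW L -> PV *m L = Lh *m PW ->
  Phi FamV FamW PV PW Lh = L.
Proof.
move=> isoL PVL; rewrite /Phi; case: pickP => [L' /andP[_ /eqP PVL'] | /(_ L)].
  by apply: (row_full_inj (parent_row_full pV)); rewrite PVL' PVL.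
by rewrite isoL PVL eqxx.
Qed.

Lemma Phi_Hset Lh : Hset PV PW Lh ->
  proj_isom FamV FamW (Phi FamV FamW PV PW Lh) /\
  PV *m Phi FamV FamW PV PW Lh = Lh *m PW.
Proof.
move=> hLh; have [L PVL] := Hset_intertwine hLh.
by rewrite (PhiE (intertwine_isom hLh PVL) PVL) (intertwine_isom hLh PVL).
Qed.

Lemma Phi_inj : {in Hset PV PW &, injective (Phi FamV FamW PV PW)}.
Proof.
move=> Lh Lh' hLh hLh' eq_Phi; apply: (hamming_isom_mulmx_inj pW).
- exact: (andP hLh).1.
- exact: (andP hLh').1.
by rewrite /= -(Phi_Hset hLh).2 -(Phi_Hset hLh').2 eq_Phi.
Qed.

Lemma Phi_preim_image Lh DV DW : Hset PV PW Lh ->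
  ((fun x => x *m Lh) @: parent_preim PV DV == parent_preim PW DW) =
  (sub_image (Phi FamV FamW PV PW Lh) DV == [set y | y \in DW]).
Proof.
move=> hLh; have [/and3P [freePhi _ _] PVPhi] := Phi_Hset hLh.
have uLh := hamming_isom_unit (andP hLh).1.
exact: image_parent_preim (parent_row_full pV) (parent_row_full pW) uLh freePhi PVPhi _ _.
Qed.

Lemma isom_Hset L : proj_isom FamV FamW L ->
  exists2 Lh, Hset PV PW Lh & PV *m L = Lh *m PW.
Proof.
case/and3P => freeL _ /forallP wL.
have /(fin_all_exists (U := fun=> 'rV_nu)) [z zP] : forall i, exists z : 'rV_nu,
    z *m PW = row i PV *m L /\ hweight z = 1%N.
  move=> i; have [z zPW le_z] := pweight_lift pW (row i PV *m L).
  exists z; split => //; apply/eqP; rewrite eqn_leq lt0n hweight_eq0 andbC.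
  apply/andP; split.
    apply: contra (parent_row_neq0 pV i) => /eqP z0.
    by rewrite -(mulmx_free_eq0 _ freeL) -zPW z0 mul0mx.
  apply: leq_trans le_z _; rewrite (eqP (wL _)) rowE.
  by apply: leq_trans (pweight_mulmx_le pV _) _; rewrite hweight_delta.
set Lh := \matrix_i z i.
have PVL : PV *m L = Lh *m PW.
  by apply/row_matrixP => i; rewrite !row_mul rowK (zP i).1.
have /(fin_all_exists (U := fun=> 'I_nu)) [s sP] : forall i, exists j,
    Lh i j != 0 /\ row i Lh = Lh i j *: 'e_j.
  by move=> i; have [j] := hweight_eq1 (zP i).2; exists j; rewrite rowK mxE.
have s_inj : injective s.
  move=> i j sij; apply: (parent_row_line_inj pV); apply/vlineP.
  exists (Lh i (s i) / Lh j (s j)); apply: (row_free_inj freeL).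
  rewrite -scalemxAl -!row_mul PVL !row_mul (sP i).2 (sP j).2 -!scalemxAl scalerA.
  by rewrite divfK ?(sP j).1 // sij.
have isoLh := monomial_hamming_isom s_inj sP.
exists Lh => //; rewrite /Hset isoLh !pcodeE /=.
by rewrite (image_parent_preim (parent_row_full pV) (parent_row_full pW)
  (hamming_isom_unit isoLh) freeL PVL) sub_image0.
Qed.

End Intertwine.

Theorem theorem4p1 (F : finFieldType) (nu : nat) :
  (* (a) and (c) *)
  (forall (n m : nat) (FamV : {set 'rV[F]_n}) (FamW : {set 'rV[F]_m})
          (PV : 'M[F]_(nu, n)) (PW : 'M[F]_(nu, m)),
     parent_fun FamV PV -> parent_fun FamW PW ->
     let Ph := Phi FamV FamW PV PW in
     (* (a) existence and uniqueness *)
     [/\ (forall Lh, Hset PV PW Lh ->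
            [/\ proj_isom FamV FamW (Ph Lh), PV *m Ph Lh = Lh *m PW &
                forall L, proj_isom FamV FamW L -> PV *m L = Lh *m PW ->
                  L = Ph Lh]),
         (* (a) Phi is a bijection H(P_V,P_W) -> Isom(V,W) *)
         {in Hset PV PW &, injective Ph},
         (forall L, proj_isom FamV FamW L ->
            exists2 Lh, Hset PV PW Lh & Ph Lh = L) &
         (* (c) restriction to subspaces *)
         forall (DV : {vspace 'rV[F]_n}) (DW : {vspace 'rV[F]_m}),
           let HD := fun Lh => Hset PV PW Lh &&
                      ((fun x => x *m Lh) @: parent_preim PV DV == parent_preim PW DW) in
           let ID := fun L => proj_isom FamV FamW L && (sub_image L DV == [set y | y \in DW]) in
           [/\ (forall Lh, HD Lh -> ID (Ph Lh)),
               {in HD &, injective Ph} &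
               (forall L, ID L -> exists2 Lh, HD Lh & Ph Lh = L)]]) /\
  (* (b) compatibility with composition *)
  (forall (n1 n2 n3 : nat) (F1 : {set 'rV[F]_n1}) (F2 : {set 'rV[F]_n2})
          (F3 : {set 'rV[F]_n3})
          (P1 : 'M[F]_(nu, n1)) (P2 : 'M[F]_(nu, n2)) (P3 : 'M[F]_(nu, n3))
          (Lh Th : 'M[F]_nu),
     parent_fun F1 P1 -> parent_fun F2 P2 -> parent_fun F3 P3 ->
     Hset P1 P2 Lh -> Hset P2 P3 Th ->
     Phi F1 F3 P1 P3 (Lh *m Th) = Phi F1 F2 P1 P2 Lh *m Phi F2 F3 P2 P3 Th).
Proof.
split=> [n m FamV FamW PV PW pV pW Ph | n1 n2 n3 F1 F2 F3 P1 P2 P3 Lh Th p1 p2 p3 hL hT].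
  rewrite {}/Ph; split.
  - move=> Lh hLh; have [isoPhi PVPhi] := Phi_Hset pV pW hLh.
    by split=> // L isoL PVL; rewrite (PhiE pV isoL PVL).
  - exact: Phi_inj.
  - move=> L isoL; have [Lh hLh PVL] := isom_Hset pV pW isoL.
    by exists Lh; rewrite // (PhiE pV isoL PVL).
  move=> DV DW; split.
  - move=> Lh /andP [hLh]; rewrite (Phi_preim_image pV pW _ _ hLh) => ->.
    by rewrite (Phi_Hset pV pW hLh).1.
  - by move=> Lh Lh' /andP [hLh _] /andP [hLh' _]; apply: Phi_inj.
  move=> L /andP [isoL imL]; have [Lh hLh PVL] := isom_Hset pV pW isoL.
  exists Lh; last by rewrite (PhiE pV isoL PVL).
  have := Phi_preim_image pV pW DV DW hLh; rewrite (PhiE pV isoL PVL) imL => img.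
  by apply/andP.
have [isoL P1L] := Phi_Hset p1 p2 hL; have [isoT P2T] := Phi_Hset p2 p3 hT.
rewrite (PhiE p1 (proj_isom_mul isoL isoT)) //.
by rewrite mulmxA P1L -mulmxA P2T mulmxA.
Qed.
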